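(* Let $(X,Y)\sim P_{X,Y}$ be random variables in $\{0,1\}\times\mathcal{Y}$, $\mathcal{Y}=\{1,\dots,|\mathcal{Y}|\}$ with $|\mathcal{Y}|\geq 3$, let $p_y=\mathbb{P}(X=0|Y=y)$ and assume $p_1\le\cdots\le p_{|\mathcal{Y}|}$. For $i\in\{2,\dots,|\mathcal{Y}|-1\}$ let $\alpha_i\in[0,1]$ satisfy $\alpha_ip_{i-1}+(1-\alpha_i)p_{i+1}=p_i$ and define $P^i_{Y,Z,X}=P_YP^i_{Z|Y}P^i_{X|Z}$ on $\mathcal{Y}\times(\mathcal{Y}\setminus\{i\})\times\{0,1\}$ by $P^i_{Z|Y}(z|y)=1$ if $y\neq i,z=y$; $=\alpha_i$ if $y=i,z=i-1$; $=1-\alpha_i$ if $y=i,z=i+1$; $=0$ otherwise; and $P^i_{X|Z}(0|z)=p_z$. Then there exists $i\in\{2,\dots,|\mathcal{Y}|-1\}$ such that under $P^i_{Y,Z,X}$, \[ I(X;Z)-I(X;Y)\leq\frac{256}{|\mathcal{Y}|^3}. \]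
   Context: Logarithms (and mutual informations) are natural. *)

From mathcomp Require Import all_boot all_order all_algebra.
From mathcomp Require Import all_classical all_reals all_analysis.
Set Implicit Arguments. Unset Strict Implicit. Unset Printing Implicit Defensive.
Import Order.TTheory GRing.Theory Num.Theory.
Local Open Scope ring_scope.

Section Defs.
Variable R : realType.

Definition mutinfo (A B : finType) (P : A -> B -> R) : R :=
  \sum_(a : A) \sum_(b : B)
     (if P a b == 0 then 0
      else P a b * ln (P a b / ((\sum_(b' : B) P a b') * (\sum_(a' : A) P a' b)))).

Variable n : nat.

(* value of f : 'I_n -> R at a natural index k (0 if k >= n) *)
Definition at_nat (f : 'I_n -> R) (k : nat) : R :=
  match @insub nat (fun k => k < n)%N 'I_n k with Some j => f j | None => 0 end.

(* P_{X|Y}(x|y) with X = 0 <-> x = false, p y = P(X=0|Y=y) *)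
Definition PXgiven (p : 'I_n -> R) (y : 'I_n) (x : bool) : R :=
  if x then 1 - p y else p y.

Definition PXY (PY p : 'I_n -> R) (x : bool) (y : 'I_n) : R :=
  PY y * PXgiven p y x.

(* the channel P^i_{Z|Y} (Z takes values in 'I_n; z = i has zero mass) *)
Definition PZgY (alpha : 'I_n -> R) (i : 'I_n) (y z : 'I_n) : R :=
  if y != i then (z == y)%:R
  else if nat_of_ord z == (nat_of_ord i).-1 then alpha i
  else if nat_of_ord z == (nat_of_ord i).+1 then 1 - alpha i
  else 0.

Definition PXZ (PY p alpha : 'I_n -> R) (i : 'I_n) (x : bool) (z : 'I_n) : R :=
  \sum_(y : 'I_n) PY y * PZgY alpha i y z * PXgiven p z x.

End Defs.

From mathcomp Require Import all_boot all_order all_algebra.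
From mathcomp Require Import all_classical all_reals all_analysis.
From mathcomp Require Import ring lra zify.
Set Implicit Arguments. Unset Strict Implicit. Unset Printing Implicit Defensive.
Import Order.TTheory GRing.Theory Num.Theory.
Local Open Scope ring_scope.

(* Write h for the binary entropy and psi x = sqrt x - sqrt (1 - x). The
   channel P^i_{Z|Y} splits the mass of y = i between its two neighbours
   without changing the law of X, so I(X;Z) - I(X;Y) is P_Y(i) times the
   Jensen gap h(p_i) - a_i h(p_{i-1}) - (1 - a_i) h(p_{i+1}).  Comparing
   x ln x with its tangent at b, via ln u <= u - 1 at u = sqrt (x / b),
   bounds this gap by 3/2 (psi p_{i+1} - psi p_{i-1})^2.  Since psi is
   increasing from -1 to 1, these increments u_i telescope to at most 4, while
   the P_Y(i) sum to at most 1; hence with m = |Y| - 2 some i has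
   m P_Y(i) + m/2 u_i <= 3, and AM-GM gives P_Y(i) u_i^2 <= 16 / m^3;
   finally 3/2 * 16 / m^3 <= 256 / (m + 2)^3 once m >= 2. *)

Section EntropyBounds.
Variable R : realType.
Implicit Types a b c s r t x al be : R.

Definition xlnx x := x * ln x.

Definition binent x := - (xlnx x + xlnx (1 - x)).

Definition sqrt_diff x := Num.sqrt x - Num.sqrt (1 - x).

Lemma xlnx0 : xlnx 0 = 0. Proof. by rewrite /xlnx mul0r. Qed.

Lemma ln_le_subr1 x : 0 < x -> ln x <= x - 1.
Proof. by move=> x_gt0; have := expR_ge1Dx (ln x); rewrite lnK ?posrE //; lra. Qed.

Lemma xlnx_bregman_le b x : 0 < b -> 0 <= x ->
  xlnx x - xlnx b - (ln b + 1) * (x - b) <=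
  (Num.sqrt x - Num.sqrt b) ^+ 2 * (2 * Num.sqrt x + Num.sqrt b) / Num.sqrt b.
Proof.
move=> b_gt0 x_ge0; rewrite /xlnx.
have r_gt0 : 0 < Num.sqrt b by rewrite sqrtr_gt0.
have eb : b = Num.sqrt b ^+ 2 by rewrite sqr_sqrtr // ltW.
have ex : x = Num.sqrt x ^+ 2 by rewrite sqr_sqrtr.
have t_ge0 : 0 <= Num.sqrt x := sqrtr_ge0 x.
move: r_gt0 t_ge0 eb ex; set r := Num.sqrt b; set t := Num.sqrt x.
move=> r_gt0 t_ge0 eb ex; have r_neq0 : r != 0 by rewrite gt_eqF.
have [x0|x_neq0] := eqVneq x 0.
  have -> : t = 0 by rewrite /t x0 sqrtr0.
  by rewrite x0 eb le_eqVlt; apply: predU1l; field.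
have x_gt0 : 0 < x by rewrite lt_def x_neq0.
have t_gt0 : 0 < t by rewrite /t sqrtr_gt0.
have ln_ratio : ln x - ln b <= 2 * (t / r - 1).
  rewrite -ln_div ?posrE // ex eb -expr_div_n lnXn ?divr_gt0 // -[_ *+ 2]mulr_natl.
  by rewrite ler_wpM2l // ln_le_subr1 // divr_gt0.
have -> : x * ln x - b * ln b - (ln b + 1) * (x - b) = x * (ln x - ln b) - x + b by ring.
apply: (le_trans (y := x * (2 * (t / r - 1)) - x + b)).
  by rewrite lerD2r lerD2r ler_wpM2l.
by rewrite ex eb le_eqVlt; apply: predU1l; field.
Qed.

(* With s, r, t = sqrt a, sqrt b, sqrt c, this is the Jensen gap bound of
   xlnx_jensen_gap_le after clearing the denominator (c - a) sqrt b. *)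
Lemma bregman_mix_poly_le s r t : 0 <= s -> s <= r -> r <= t ->
  (t ^+ 2 - r ^+ 2) * ((s - r) ^+ 2 * (2 * s + r)) +
  (r ^+ 2 - s ^+ 2) * ((t - r) ^+ 2 * (2 * t + r))
  <= 3 / 2 * (t - s) ^+ 2 * ((t ^+ 2 - s ^+ 2) * r).
Proof.
move=> s_ge0 sr rt.
have r_ge0 : 0 <= r by lra.
have t_ge0 : 0 <= t by lra.
have left_le : (t + r) * (2 * s + r) <= 6 * r * (t + s) by nra.
have right_le : (r + s) * (2 * t + r) <= 6 * r * (t + s) by nra.
have prod_le : (r - s) * (t - r) <= (t - s) ^+ 2 / 4.
  by have := sqr_ge0 (2 * r - s - t); nra.
have -> : (t ^+ 2 - r ^+ 2) * ((s - r) ^+ 2 * (2 * s + r)) +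
          (r ^+ 2 - s ^+ 2) * ((t - r) ^+ 2 * (2 * t + r)) =
  (r - s) * (t - r) * ((r - s) * ((t + r) * (2 * s + r)) + (t - r) * ((r + s) * (2 * t + r))).
  by ring.
have sum_le : (r - s) * ((t + r) * (2 * s + r)) + (t - r) * ((r + s) * (2 * t + r))
              <= (t - s) * (6 * r * (t + s)) by nra.
have -> : 3 / 2 * (t - s) ^+ 2 * ((t ^+ 2 - s ^+ 2) * r) = (t - s) ^+ 2 / 4 * ((t - s) * (6 * r * (t + s))) by field.
apply: ler_pM => //; first by nra.
by apply: addr_ge0; rewrite !mulr_ge0 //; lra.
Qed.

Lemma xlnx_jensen_gap_le a b c be : 0 <= a -> a <= b -> b <= c -> 0 <= be <= 1 ->
  b = be * a + (1 - be) * c ->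
  be * xlnx a + (1 - be) * xlnx c - xlnx b <= 3 / 2 * (Num.sqrt c - Num.sqrt a) ^+ 2.
Proof.
move=> a_ge0 ab bc /andP[be_ge0 be_le1] eb.
have [b_le0|b_gt0] := leP b 0.
  have [a0 b0] : a = 0 /\ b = 0 by split; lra.
  have c0 : (1 - be) * c = 0 by move: eb; rewrite a0 b0 mulr0 add0r => <-.
  by rewrite a0 b0 !xlnx0 mulr0 add0r subr0 /xlnx mulrA c0 mul0r mulr_ge0 ?sqr_ge0.
have [ac|ac] := eqVneq a c.
  have ba : b = a by rewrite eb -ac; ring.
  by rewrite ba -ac subrr expr2 !mulr0; lra.
have ca_gt0 : 0 < c - a by rewrite subr_gt0 lt_def eq_sym ac (le_trans ab bc).
have cb : be * (c - a) = c - b by rewrite eb; ring.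
have ba : (1 - be) * (c - a) = b - a by rewrite eb; ring.
have -> : be * xlnx a + (1 - be) * xlnx c - xlnx b =
    be * (xlnx a - xlnx b - (ln b + 1) * (a - b)) +
    (1 - be) * (xlnx c - xlnx b - (ln b + 1) * (c - b)) +
    (ln b + 1) * (be * a + (1 - be) * c - b) by ring.
rewrite -eb subrr mulr0 addr0.
have r_gt0 : 0 < Num.sqrt b by rewrite sqrtr_gt0.
have [ea eb2 ec] : [/\ a = Num.sqrt a ^+ 2, b = Num.sqrt b ^+ 2 & c = Num.sqrt c ^+ 2].
  by rewrite !sqr_sqrtr // ?ltW //; lra.
have sr : Num.sqrt a <= Num.sqrt b by rewrite ler_sqrt // ltW.
have rt : Num.sqrt b <= Num.sqrt c by rewrite ler_sqrt //; lra.
have Da := xlnx_bregman_le b_gt0 a_ge0.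
have Dc := xlnx_bregman_le b_gt0 (le_trans a_ge0 (le_trans ab bc)).
move: r_gt0 ea eb2 ec sr rt Da Dc ca_gt0 cb ba.
set s := Num.sqrt a; set r := Num.sqrt b; set t := Num.sqrt c.
move=> r_gt0 ea eb2 ec sr rt Da Dc ca_gt0 cb ba.
apply: (le_trans (lerD (ler_wpM2l be_ge0 Da) (ler_wpM2l _ Dc))); first lra.
rewrite (_ : _ + _ = (be * (c - a) * ((s - r) ^+ 2 * (2 * s + r)) +
  (1 - be) * (c - a) * ((t - r) ^+ 2 * (2 * t + r))) / ((c - a) * r)); last first.
  by field; rewrite !gt_eqF.
rewrite cb ba ler_pdivrMr ?mulr_gt0 // ea eb2 ec.
exact: bregman_mix_poly_le (sqrtr_ge0 a) sr rt.
Qed.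

Lemma binent_jensen_gap_le a b c al : 0 <= a -> a <= b -> b <= c -> c <= 1 ->
  0 <= al <= 1 -> b = al * a + (1 - al) * c ->
  binent b - al * binent a - (1 - al) * binent c <=
  3 / 2 * (sqrt_diff c - sqrt_diff a) ^+ 2.
Proof.
move=> a_ge0 ab bc c_le1 al01 eb; have /andP[al_ge0 al_le1] := al01.
have gap := xlnx_jensen_gap_le a_ge0 ab bc al01 eb.
have gap' : (1 - al) * xlnx (1 - c) + (1 - (1 - al)) * xlnx (1 - a) - xlnx (1 - b) <=
            3 / 2 * (Num.sqrt (1 - a) - Num.sqrt (1 - c)) ^+ 2.
  by apply: xlnx_jensen_gap_le; rewrite ?eb; try lra; apply/andP; split; lra.
have X_ge0 : 0 <= Num.sqrt c - Num.sqrt a by rewrite subr_ge0 ler_sqrt //; lra.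
have Y_ge0 : 0 <= Num.sqrt (1 - a) - Num.sqrt (1 - c) by rewrite subr_ge0 ler_sqrt //; lra.
have XY_ge0 := mulr_ge0 X_ge0 Y_ge0.
have -> : sqrt_diff c - sqrt_diff a =
    (Num.sqrt c - Num.sqrt a) + (Num.sqrt (1 - a) - Num.sqrt (1 - c)).
  by rewrite /sqrt_diff; ring.
rewrite /binent; lra.
Qed.

Lemma sqrt_diff_le x y : 0 <= x -> x <= y -> y <= 1 -> sqrt_diff x <= sqrt_diff y.
Proof. by move=> x_ge0 xy y_le1; rewrite /sqrt_diff lerB // ler_sqrt //; lra. Qed.

Lemma sqrt_diff_bound x : 0 <= x <= 1 -> -1 <= sqrt_diff x <= 1.
Proof.
move=> /andP[x_ge0 x_le1].
have := sqrt_diff_le (lexx 0) x_ge0 x_le1; have := sqrt_diff_le x_ge0 x_le1 (lexx 1).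
rewrite /sqrt_diff subrr subr0 sqrtr0 sqrtr1 => up low; apply/andP; split; lra.
Qed.

End EntropyBounds.

Section MutualInformation.
Variable R : realType.

Lemma mutinfo_channel (A B : finType) (Q : B -> R) (W : B -> A -> R) :
  (forall b, 0 <= Q b) -> (forall b a, 0 <= W b a) -> (forall b, \sum_a W b a = 1) ->
  mutinfo (fun a b => Q b * W b a) =
  \sum_b Q b * \sum_a xlnx (W b a) - \sum_a xlnx (\sum_b Q b * W b a).
Proof.
move=> Q_ge0 W_ge0 W_sum1; rewrite /mutinfo /=.
under [X in _ = X - _]eq_bigr do rewrite mulr_sumr.
rewrite [X in _ = X - _]exchange_big -sumrB; apply: eq_bigr => a _ /=.
set M := \sum_b Q b * W b a.
rewrite [xlnx M]/xlnx mulr_suml -sumrB; apply: eq_bigr => b _ /=.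
rewrite -mulr_sumr W_sum1 mulr1 /xlnx.
have [QW0|QW_neq0] := eqVneq (Q b * W b a) 0; first by rewrite mulrA QW0 !mul0r subrr.
have [Q_neq0 W_neq0] : Q b != 0 /\ W b a != 0.
  by split; apply: contraNneq QW_neq0 => ->; rewrite ?mul0r ?mulr0.
have QW_gt0 : 0 < Q b * W b a.
  by apply: mulr_gt0; rewrite lt_def ?Q_neq0 ?W_neq0 ?Q_ge0 ?W_ge0.
have M_gt0 : 0 < M.
  apply: (lt_le_trans QW_gt0); rewrite /M (bigD1 b) //= lerDl.
  by apply: sumr_ge0 => b' _; apply: mulr_ge0.
rewrite (_ : Q b * W b a / (M * Q b) = W b a / M); last by field; rewrite Q_neq0 gt_eqF.
by rewrite ln_div ?posrE // ?lt_def ?W_neq0 ?W_ge0 //; ring.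
Qed.

Lemma mutinfo_binary (B : finType) (Q p : B -> R) :
  (forall b, 0 <= Q b) -> (forall b, 0 <= p b <= 1) -> \sum_b Q b = 1 ->
  mutinfo (fun (x : bool) b => Q b * (if x then 1 - p b else p b)) =
  binent (\sum_b Q b * p b) - \sum_b Q b * binent (p b).
Proof.
move=> Q_ge0 p01 Q_sum1.
have W_ge0 b (x : bool) : 0 <= if x then 1 - p b else p b.
  by have /andP[] := p01 b; case: x; lra.
have W_sum1 b : \sum_(x : bool) (if x then 1 - p b else p b) = 1 by rewrite big_bool /=; ring.
rewrite mutinfo_channel // big_bool /=.
under eq_bigr do rewrite big_bool /=.
have -> : \sum_b Q b * (1 - p b) = 1 - \sum_b Q b * p b.
  by under eq_bigr do rewrite mulrBr mulr1; rewrite sumrB Q_sum1.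
have -> : \sum_b Q b * binent (p b) = - \sum_b Q b * (xlnx (1 - p b) + xlnx (p b)).
  by rewrite -sumrN; apply: eq_bigr => b _; rewrite /binent; ring.
by rewrite /binent; ring.
Qed.

End MutualInformation.

Section Channel.
Variables (R : realType) (n : nat).

Lemma at_natE (f : 'I_n -> R) k (lt_kn : (k < n)%N) : at_nat f k = f (Ordinal lt_kn).
Proof. by rewrite /at_nat insubT. Qed.

Lemma at_nat_val (f : 'I_n -> R) (i : 'I_n) : at_nat f i = f i.
Proof. by rewrite /at_nat valK. Qed.

Lemma at_nat_ge0 (f : 'I_n -> R) k : (forall i, 0 <= f i) -> 0 <= at_nat f k.
Proof. by move=> f_ge0; rewrite /at_nat; case: insubP. Qed.

Lemma at_nat01 (f : 'I_n -> R) k : (forall i, 0 <= f i <= 1) -> 0 <= at_nat f k <= 1.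
Proof. by move=> f01; rewrite /at_nat; case: insubP => [j _ _|_]; rewrite ?lexx ?ler01. Qed.

Lemma at_nat_le (f : 'I_n -> R) j k : (forall a b : 'I_n, (a <= b)%N -> f a <= f b) ->
  (j <= k < n)%N -> at_nat f j <= at_nat f k.
Proof.
move=> f_mono /andP[jk kn]; have jn : (j < n)%N by apply: leq_ltn_trans kn.
by rewrite (at_natE _ jn) (at_natE _ kn) f_mono.
Qed.

Lemma sum_at_nat_le (f : 'I_n -> R) a b : (forall i, 0 <= f i) -> (a <= b <= n)%N ->
  \sum_(a <= k < b) at_nat f k <= \sum_i f i.
Proof.
move=> f_ge0 /andP[ab bn].
rewrite -(eq_bigr _ (fun i _ => at_nat_val f i)) -(big_mkord xpredT (at_nat f)).
rewrite (big_cat_nat (leq0n a) (leq_trans ab bn)) (big_cat_nat ab bn) /=.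
by rewrite addrCA lerDl addr_ge0 ?sumr_ge0 // => k _; apply: at_nat_ge0.
Qed.

Lemma sum_indicator_at_nat (F : 'I_n -> R) k :
  \sum_z (nat_of_ord z == k)%:R * F z = at_nat F k.
Proof.
rewrite /at_nat; case: insubP => [j _ <-|k_ge].
  rewrite (bigD1 j) //= eqxx mul1r big1 ?addr0 // => z zj.
  by rewrite (_ : (_ == _) = false) ?mul0r //; exact: negbTE zj.
rewrite big1 // => z _; case: eqP => [zk|_]; last by rewrite mul0r.
by move: k_ge; rewrite -zk ltn_ord.
Qed.

Lemma PZgY_ge0 (alpha : 'I_n -> R) i y z : 0 <= alpha i <= 1 -> 0 <= PZgY alpha i y z.
Proof.
move=> /andP[al_ge0 al_le1]; rewrite /PZgY.
by case: (y != i); rewrite ?ler0n //; do 2 case: ifP => _ //; lra.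
Qed.

(* No range condition on i: a neighbour outside 'I_n gets no mass from PZgY
   and is read as 0 by at_nat. *)
Lemma sum_PZgY (alpha F : 'I_n -> R) (i y : 'I_n) :
  \sum_z PZgY alpha i y z * F z =
  if y == i then alpha i * at_nat F i.-1 + (1 - alpha i) * at_nat F i.+1 else F y.
Proof.
rewrite /PZgY; have [->|yi] /= := eqVneq y i.
  have PZgY_split (z : 'I_n) :
      (if nat_of_ord z == i.-1 then alpha i else if nat_of_ord z == i.+1 then 1 - alpha i else 0)
      = alpha i * (nat_of_ord z == i.-1)%:R + (1 - alpha i) * (nat_of_ord z == i.+1)%:R.
    have [->|_] := eqVneq (nat_of_ord z) i.-1; last by case: eqP => _ /=; ring.
    by rewrite (_ : (i.-1 == i.+1) = false) /=; [ring | apply/eqP; lia].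
  under eq_bigr do rewrite PZgY_split mulrDl -!mulrA.
  by rewrite big_split -!mulr_sumr !sum_indicator_at_nat.
rewrite (bigD1 y) //= eqxx mul1r big1 ?addr0 // => z zy.
by rewrite (negbTE zy) mul0r.
Qed.

Lemma sum_PY_PZgY (PY alpha F : 'I_n -> R) (i : 'I_n) :
  \sum_z (\sum_y PY y * PZgY alpha i y z) * F z =
  \sum_y PY y * F y +
  PY i * (alpha i * at_nat F i.-1 + (1 - alpha i) * at_nat F i.+1 - F i).
Proof.
under eq_bigr do rewrite mulr_suml.
rewrite exchange_big /=.
under eq_bigr => y _ do under eq_bigr => z _ do rewrite -mulrA.
under eq_bigr => y _ do rewrite -mulr_sumr sum_PZgY.
rewrite (bigD1 i) //= eqxx [in RHS](bigD1 i) //=.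
rewrite (eq_bigr (fun y => PY y * F y)) => [|y /negbTE -> //].
ring.
Qed.

Lemma mutinfo_PXZ_sub_PXY (PY p alpha : 'I_n -> R) (i : 'I_n) :
  (0 < i < n.-1)%N -> (forall y, 0 <= PY y) -> \sum_y PY y = 1 ->
  (forall y, 0 <= p y <= 1) -> 0 <= alpha i <= 1 ->
  alpha i * at_nat p i.-1 + (1 - alpha i) * at_nat p i.+1 = p i ->
  mutinfo (PXZ PY p alpha i) - mutinfo (PXY PY p) =
  PY i * (binent (p i) - alpha i * binent (at_nat p i.-1)
          - (1 - alpha i) * binent (at_nat p i.+1)).
Proof.
move=> i_mid PY_ge0 PY_sum1 p01 al01 p_mix.
have [lt_i1 lt_i2] : (i.-1 < n)%N /\ (i.+1 < n)%N by lia.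
pose Q z := \sum_y PY y * PZgY alpha i y z.
have Q_ge0 z : 0 <= Q z by apply: sumr_ge0 => y _; rewrite mulr_ge0 ?PZgY_ge0.
have Q_sum1 : \sum_z Q z = 1.
  transitivity (\sum_z Q z * 1); first by apply: eq_bigr => z _; rewrite mulr1.
  rewrite /Q (sum_PY_PZgY _ _ (fun=> 1)) (at_natE _ lt_i1) (at_natE _ lt_i2).
  by under eq_bigr do rewrite mulr1; rewrite PY_sum1; ring.
have PXZ_eq : PXZ PY p alpha i = fun x z => Q z * PXgiven p z x.
  by apply/funext => x; apply/funext => z; rewrite /PXZ mulr_suml.
have mean : \sum_z Q z * p z = \sum_y PY y * p y.
  by rewrite /Q sum_PY_PZgY p_mix subrr mulr0 addr0.
have ent : \sum_z Q z * binent (p z) = \sum_y PY y * binent (p y) +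
    PY i * (alpha i * binent (at_nat p i.-1) + (1 - alpha i) * binent (at_nat p i.+1)
            - binent (p i)).
  rewrite /Q (sum_PY_PZgY _ _ (fun z => binent (p z))).
  by rewrite !(at_natE _ lt_i1) !(at_natE _ lt_i2).
rewrite PXZ_eq /PXY /PXgiven !mutinfo_binary // mean ent; ring.
Qed.

End Channel.

Section Averaging.
Variable R : realType.

Lemma telescope2_sumr (V : zmodType) (f : nat -> V) N : (0 < N)%N ->
  \sum_(1 <= k < N) (f k.+1 - f k.-1) = (f N - f 1%N) + (f N.-1 - f 0%N).
Proof.
move=> N_gt0.
have -> : \sum_(1 <= k < N) (f k.+1 - f k.-1) =
          \sum_(1 <= k < N) ((f k.+1 - f k) + (f k - f k.-1)).
  by apply: eq_bigr => k _; rewrite addrA subrK.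
by rewrite big_split /= telescope_sumr // big_add1 telescope_sumr // -ltnS prednK.
Qed.

Lemma exists_le_mean (f : nat -> R) a b (c : R) : (a < b)%N ->
  \sum_(a <= k < b) f k <= (b - a)%:R * c -> exists2 k, (a <= k < b)%N & f k <= c.
Proof.
move=> ab sum_le; have [//|none] := pselect (exists2 k, (a <= k < b)%N & f k <= c).
have : \sum_(a <= k < b) c < \sum_(a <= k < b) f k.
  apply: ltr_sum_nat => // k kab; rewrite ltNge; apply/negP => fk; apply: none.
  by exists k.
by rewrite sumr_const_nat -mulr_natl ltNge sum_le.
Qed.

Lemma amgm_sqr_le1 (x y : R) : 0 <= x -> 0 <= y -> x + 2 * y <= 3 -> x * y ^+ 2 <= 1.
Proof.
move=> x_ge0 y_ge0 xy_le3.
have : x * y ^+ 2 <= (3 - 2 * y) * y ^+ 2 by rewrite ler_wpM2r ?sqr_ge0 //; lra.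
have : 0 <= (y - 1) ^+ 2 * (2 * y + 1) by rewrite mulr_ge0 ?sqr_ge0 //; lra.
lra.
Qed.

(* Average m q_k + m/2 u_k (at most 3 on average) and apply AM-GM to
   x = m q_k and y = m u_k / 4. *)
Lemma exists_small_weighted_increment (q u : nat -> R) (m : nat) : (0 < m)%N ->
  (forall k, (1 <= k <= m)%N -> 0 <= q k /\ 0 <= u k) ->
  \sum_(1 <= k < m.+1) q k <= 1 -> \sum_(1 <= k < m.+1) u k <= 4 ->
  exists2 k, (1 <= k <= m)%N & m%:R ^+ 3 * (q k * u k ^+ 2) <= 16.
Proof.
move=> m_gt0 qu_ge0 q_sum u_sum.
have m_pos : 0 < m%:R :> R by rewrite ltr0n.
have [k k_mid le3] : exists2 k, (1 <= k < m.+1)%N & m%:R * q k + m%:R / 2 * u k <= 3.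
  apply: exists_le_mean => //; rewrite big_split /= -!mulr_sumr subn1 /=.
  have := ler_wpM2l (ltW m_pos) q_sum.
  have := ler_wpM2l (divr_ge0 (ltW m_pos) (ler0n R 2)) u_sum.
  lra.
exists k => //; have [q_ge0 u_ge0] := qu_ge0 k k_mid.
have x_ge0 : 0 <= m%:R * q k by rewrite mulr_ge0 // ltW.
have y_ge0 : 0 <= m%:R * u k / 4 by rewrite divr_ge0 // mulr_ge0 // ltW.
have := amgm_sqr_le1 x_ge0 y_ge0.
rewrite (_ : m%:R ^+ 3 * _ = 16 * (m%:R * q k * (m%:R * u k / 4) ^+ 2)); last by field.
lra.
Qed.

(* For N = 3 the cubic bound is too weak and only w <= 4 is used. *)
Lemma cubic_rate_le (N : nat) (w : R) : (3 <= N)%N -> 0 <= w <= 4 ->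
  N.-2%:R ^+ 3 * w <= 16 -> 3 / 2 * w <= 256 / N%:R ^+ 3.
Proof.
move=> N_ge3 /andP[w_ge0 w_le4].
rewrite ler_pdivlMr; last by rewrite exprn_gt0 // ltr0n; lia.
case: N N_ge3 => [|[|[|[|N]]]] //= _ w_small; first lra.
set M : R := N.+2%:R.
have M_ge2 : 2 <= M by rewrite /M ler_nat.
have -> : N.+4%:R = M + 2 :> R by rewrite /M -addn2 natrD.
have cube_le : 3 * (M + 2) ^+ 3 <= 32 * M ^+ 3.
  have : 2 * M <= M * M by rewrite ler_wpM2r //; lra.
  have : 2 * (M * M) <= M * (M * M) by rewrite ler_wpM2r //; nra.
  rewrite !exprS expr0; lra.
have := ler_wpM2l w_ge0 cube_le.
lra.
Qed.

End Averaging.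

Section Increments.
Variables (R : realType) (n : nat).
Variable p : 'I_n -> R.
Hypothesis p01 : forall y, 0 <= p y <= 1.
Hypothesis p_mono : forall a b : 'I_n, (a <= b)%N -> p a <= p b.

Definition sqrt_diff_incr k := sqrt_diff (at_nat p k.+1) - sqrt_diff (at_nat p k.-1).

Lemma sqrt_diff_incr_ge0 k : (k.+1 < n)%N -> 0 <= sqrt_diff_incr k.
Proof.
move=> lt_k1n; have /andP[lo _] := at_nat01 k.-1 p01.
have /andP[_ hi] := at_nat01 k.+1 p01.
by rewrite subr_ge0 sqrt_diff_le // at_nat_le //; lia.
Qed.

Lemma sqrt_diff_incr_le2 k : sqrt_diff_incr k <= 2.
Proof.
have /andP[_ ?] := sqrt_diff_bound (at_nat01 k.+1 p01).
have /andP[? _] := sqrt_diff_bound (at_nat01 k.-1 p01).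
rewrite /sqrt_diff_incr; lra.
Qed.

Lemma sum_sqrt_diff_incr_le4 N : (0 < N)%N -> \sum_(1 <= k < N) sqrt_diff_incr k <= 4.
Proof.
move=> N_gt0; rewrite (telescope2_sumr (fun k => sqrt_diff (at_nat p k))) //.
have := sqrt_diff_bound (at_nat01 N p01); have := sqrt_diff_bound (at_nat01 N.-1 p01).
have := sqrt_diff_bound (at_nat01 1 p01); have := sqrt_diff_bound (at_nat01 0 p01).
move=> /andP[? ?] /andP[? ?] /andP[? ?] /andP[? ?]; lra.
Qed.

Lemma exists_small_sqrt_diff_incr (PY : 'I_n -> R) : (3 <= n)%N ->
  (forall y, 0 <= PY y) -> \sum_y PY y = 1 ->
  exists2 i : 'I_n, (0 < i < n.-1)%N &
    n.-2%:R ^+ 3 * (PY i * sqrt_diff_incr i ^+ 2) <= 16.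
Proof.
move=> n_ge3 PY_ge0 PY_sum1.
have [k k_mid small] : exists2 k, (1 <= k <= n.-2)%N &
    n.-2%:R ^+ 3 * (at_nat PY k * sqrt_diff_incr k ^+ 2) <= 16.
  apply: (exists_small_weighted_increment (q := at_nat PY) (u := sqrt_diff_incr)).
  - lia.
  - by move=> k k_mid; rewrite at_nat_ge0 ?sqrt_diff_incr_ge0 //; lia.
  - by rewrite -PY_sum1 sum_at_nat_le //; lia.
  - exact: sum_sqrt_diff_incr_le4.
have lt_kn : (k < n)%N by lia.
by exists (Ordinal lt_kn); [rewrite /=; lia | rewrite -(at_natE _ lt_kn)].
Qed.

End Increments.

Theorem theorem4 (R : realType) (n : nat) (PY p alpha : 'I_n -> R) :
  (3 <= n)%N ->
  (forall y, 0 <= PY y) -> \sum_(y : 'I_n) PY y = 1 ->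
  (forall y, 0 <= p y <= 1) ->
  (forall a b : 'I_n, (a <= b)%N -> p a <= p b) ->
  (forall i : 'I_n, (0 < i < n.-1)%N ->
     0 <= alpha i <= 1 /\
     alpha i * at_nat p i.-1 + (1 - alpha i) * at_nat p i.+1 = p i) ->
  exists i : 'I_n, (0 < i < n.-1)%N /\
     mutinfo (PXZ PY p alpha i) - mutinfo (PXY PY p)
       <= 256 / (n%:R ^+ 3).
Proof.
move=> n_ge3 PY_ge0 PY_sum1 p01 p_mono mix.
have [i i_mid small] := exists_small_sqrt_diff_incr p01 p_mono n_ge3 PY_ge0 PY_sum1.
have [al01 p_mix] := mix i i_mid.
exists i; split => //; rewrite mutinfo_PXZ_sub_PXY //.
have [p_lo p_hi] : at_nat p i.-1 <= p i /\ p i <= at_nat p i.+1.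
  by rewrite -(at_nat_val p i); split; apply: at_nat_le => //=; lia.
have /andP[a_ge0 _] := at_nat01 i.-1 p01; have /andP[_ c_le1] := at_nat01 i.+1 p01.
have gap_le := binent_jensen_gap_le a_ge0 p_lo p_hi c_le1 al01 (esym p_mix).
apply: le_trans (ler_wpM2l (PY_ge0 i) gap_le) _; rewrite mulrCA.
apply: cubic_rate_le n_ge3 _ small.
have PY_le1 : PY i <= 1 by rewrite -PY_sum1 (bigD1 i) //= lerDl sumr_ge0.
have incr_ge0 : 0 <= sqrt_diff_incr p i by apply: sqrt_diff_incr_ge0 => //; lia.
have := sqrt_diff_incr_le2 p01 i.
by rewrite mulr_ge0 ?sqr_ge0 //=; nra.
Qed.
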